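(* With $f$ as in the context (and $n\ge 3$), if $u\in U$ satisfies $u\wedge V\subseteq Vf$, then $u=0$.
   Context: Let $p$ be a prime, $\mathbb{F}=\mathrm{GF}(p)$, and $n\ge 3$. Let $V$ be an $\mathbb{F}$-vector space with basis $v_0,\dots,v_n$, $U=\langle v_1,\dots,v_n\rangle$, $W=\Lambda^2V$, and for $x\in V$, $x\wedge V=\{x\wedge y:y\in V\}$. Maps are written on the right. The linear map $f:V\to W$ is given by $v_0f=\sum_{i=1}^n b_i\, v_0\wedge v_i+\sum_{1\le j<k\le n}c_{j,k}\, v_j\wedge v_k$ and $v_if=\sum_{j=1}^n A_{i,j}\, v_0\wedge v_j$ for $1\le i\le n$, where $b\in\mathbb{F}^n$ and $c=(c_{j,k})\in\mathbb{F}^{\binom n2}$ are nonzero, and $A$ is the $n\times n$ companion matrix of the minimal polynomial over $\mathbb{F}$ of a primitive element of $\mathrm{GF}(p^n)$. *)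

From HB Require Import structures.
From mathcomp Require Import all_boot all_order all_algebra all_field.
Set Implicit Arguments. Unset Strict Implicit. Unset Printing Implicit Defensive.
Import GRing.Theory.
Local Open Scope ring_scope.

(* Model of V = F^{n+1} (row vectors, maps written on the right) with basis
   v_0..v_n = delta_mx 0 i, and of W = Lambda^2 V as alternating matrices:
   x /\ y  is represented by  x^T y - y^T x. *)
Definition basisv {F : fieldType} {m : nat} (i : 'I_m) : 'rV[F]_m :=
  delta_mx 0 i.

Definition wedge {F : fieldType} {m : nat} (x y : 'rV[F]_m) : 'M[F]_m :=
  x^T *m y - y^T *m x.

(* Companion matrix of a (monic, degree n) polynomial q, acting on row
   vectors on the right: e_i A = e_{i+1} (i < n-1), e_{n-1} A = - sum q_j e_j. *)
Definition companion (F : fieldType) (n : nat) (q : {poly F}) : 'M[F]_n :=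
  \matrix_(i < n, j < n)
     ((if (i.+1 == j :> nat)%N then 1 else 0) - (if (i == n.-1 :> nat)%N then q`_j else 0)).

(* The linear map f : V -> W of the paper, V = F^{n+1}.
   Index 0 of 'I_n.+1 is v_0; index  lift ord0 i  (i : 'I_n) is v_{i+1}. *)
Definition f_v0 (F : fieldType) (n : nat) (b : 'rV[F]_n)
    (c : 'I_n -> 'I_n -> F) : 'M[F]_n.+1 :=
  \sum_(i < n) b 0 i *: wedge (basisv ord0) (basisv (lift ord0 i))
  + \sum_(j < n) \sum_(k < n | (j < k)%N)
       c j k *: wedge (basisv (lift ord0 j)) (basisv (lift ord0 k)).

Definition f_vi (F : fieldType) (n : nat) (A : 'M[F]_n) (i : 'I_n)
    : 'M[F]_n.+1 :=
  \sum_(j < n) A i j *: wedge (basisv ord0) (basisv (lift ord0 j)).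

Definition fmap (F : fieldType) (n : nat) (b : 'rV[F]_n)
    (c : 'I_n -> 'I_n -> F) (A : 'M[F]_n) (x : 'rV[F]_n.+1) : 'M[F]_n.+1 :=
  x 0 ord0 *: f_v0 b c + \sum_(i < n) x 0 (lift ord0 i) *: f_vi A i.

From HB Require Import structures.
From mathcomp Require Import all_boot all_order all_algebra all_field.
From mathcomp Require Import zify.
Import GRing.Theory.
Local Open Scope ring_scope.

(* Only [v_0 f] has components in [U /\ U], so on that block [Vf] is the line
   spanned by [v_0 f].  If [u = sum u_i v_i] has [u_a != 0] (a >= 1), pick two
   further indices [j != k] among [1..n] (here [n >= 3] is used).  The
   [U /\ U]-block of [u /\ v_j] is nonzero at [(a, j)], while that of
   [u /\ v_k] vanishes at [(a, j)] but not at [(a, k)]; the latter cannot be a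
   multiple of [v_0 f]. *)

Lemma wedgeE (F : fieldType) m (x y : 'rV[F]_m) r s :
  wedge x y r s = x 0 r * y 0 s - y 0 r * x 0 s.
Proof. by rewrite /wedge !mxE !big_ord1 !mxE. Qed.

Lemma basisvE (F : fieldType) m (j i : 'I_m) :
  (basisv j : 'rV[F]_m) 0 i = (j == i)%:R.
Proof. by rewrite /basisv mxE eqxx eq_sym. Qed.

Lemma wedge_basisv_neq (F : fieldType) m (u : 'rV[F]_m) (j r s : 'I_m) :
  j != r -> wedge u (basisv j) r s = u 0 r * (j == s)%:R.
Proof. by move=> /negbTE jr; rewrite wedgeE !basisvE jr mul0r subr0. Qed.

Lemma fmap_block (F : fieldType) n b c A (x : 'rV[F]_n.+1) r s :
  r != ord0 -> s != ord0 -> fmap b c A x r s = x 0 ord0 * f_v0 b c r s.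
Proof.
move=> /negbTE r0 /negbTE s0.
rewrite /fmap mxE [X in _ + X]summxE big1 ?addr0 ?mxE // => i _.
rewrite mxE summxE big1 ?mulr0 // => k _.
by rewrite mxE wedgeE !basisvE !(eq_sym ord0) r0 s0 mul0r mulr0 subr0 mulr0.
Qed.

Lemma exists_two_nonzero_ord_neq n (a : 'I_n.+1) : (3 <= n)%N ->
  exists j k : 'I_n.+1, [/\ j != ord0, k != ord0, j != a, k != a & j != k].
Proof.
move=> n3; have i1 : (1 < n.+1)%N by lia.
have i2 : (2 < n.+1)%N by lia.
have i3 : (3 < n.+1)%N by lia.
set o1 := Ordinal i1; set o2 := Ordinal i2; set o3 := Ordinal i3.
have [->|a1] := eqVneq a o1.
  by exists o2, o3; split; apply/eqP; move/(congr1 val).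
have [->|a2] := eqVneq a o2.
  by exists o1, o3; split; apply/eqP; move/(congr1 val).
by exists o1, o2; split; rewrite 1?eq_sym //; apply/eqP; move/(congr1 val).
Qed.

Lemma wedge_sub_fmap_eq0 (F : fieldType) n b c (A : 'M[F]_n)
    (u : 'rV[F]_n.+1) : (3 <= n)%N -> u 0 ord0 = 0 ->
  (forall y, exists x, wedge u y = fmap b c A x) -> u = 0.
Proof.
move=> n3 u0 uV; apply/rowP => a; rewrite mxE; apply/eqP/negPn/negP => ua.
have a0 : a != ord0 by apply: contra ua => /eqP ->; rewrite u0.
have [j [k [j0 k0 ja ka jk]]] := @exists_two_nonzero_ord_neq n a n3.
have block y : exists x0, forall r s, r != ord0 -> s != ord0 ->
    wedge u y r s = x0 * f_v0 b c r s.
  by have [x ->] := uV y; exists (x 0 ord0) => r s; apply: fmap_block.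
have [x uj] := block (basisv j); have [x' uk] := block (basisv k).
have uaj := uj a j a0 j0; have uakj := uk a j a0 j0; have uakk := uk a k a0 k0.
rewrite wedge_basisv_neq // eqxx mulr1 in uaj.
rewrite wedge_basisv_neq // eqxx mulr1 in uakk.
rewrite wedge_basisv_neq // eq_sym (negbTE jk) mulr0 in uakj.
have Maj : f_v0 b c a j != 0 by apply: contra ua => /eqP Mj; rewrite uaj Mj mulr0.
have x0 : x' = 0.
  by move/esym/eqP: uakj; rewrite mulf_eq0 (negbTE Maj) orbF => /eqP.
by move: ua; rewrite uakk x0 mul0r eqxx.
Qed.

Theorem lemma3p2 (p n : nat) (hp : prime p) (hn : (3 <= n)%N)
    (L : fieldExtType 'F_p) (hL : \dim {:L} = n)
    (z : L) (hz : (p ^ n).-1.-primitive_root z)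
    (q : {poly 'F_p}) (hqm : q \is monic) (hqi : irreducible_poly q)
    (hqz : root (map_poly (in_alg L) q) z)
    (b : 'rV['F_p]_n) (hb : b != 0)
    (c : 'I_n -> 'I_n -> 'F_p)
    (hc : exists j k : 'I_n, (j < k)%N /\ c j k != 0)
    (u : 'rV['F_p]_n.+1) (hu : u 0 ord0 = 0)
    (huV : forall y : 'rV['F_p]_n.+1,
        exists x : 'rV['F_p]_n.+1, wedge u y = fmap b c (companion n q) x) :
  u = 0.
Proof. exact: wedge_sub_fmap_eq0 hn hu huV. Qed.
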